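(* There is an absolute constant $C$ such that for all real $x\ge2$ and $y\ge3$, $$\pi(x+y)-\pi(x)\le\frac{2y}{\log y}+C\,\frac{y\log\log y}{(\log y)^2}.$$
   Context: $\pi(t)$ denotes the number of primes $\le t$. *)

From Stdlib Require Import Reals ZArith Znumtheory List.
Open Scope R_scope.

Definition prime_count_nat (n : nat) : nat :=
  length (filter (fun k => if prime_dec (Z.of_nat k) then true else false)
                 (seq 1 n)).

(* pi(t) = number of primes <= t, for real t: primes <= t are primes <= floor t.
   Int_part t = floor t; for t < 1 Z.to_nat gives 0 or a value < 1, no primes. *)
Definition prime_pi (t : R) : nat := prime_count_nat (Z.to_nat (Int_part t)).

From Stdlib Require Import Reals ZArith Znumtheory List Lra.
From HB Require Import structures.
From mathcomp Require Import all_boot all_order all_algebra.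
From mathcomp Require algebra_tactics.ring algebra_tactics.lra.
From mathcomp Require Import zify.
From mathcomp Require Import Rstruct.
Set Implicit Arguments. Unset Strict Implicit. Unset Printing Implicit Defensive.
Import Order.TTheory GRing.Theory Num.Theory.

(* Selberg's upper-bound sieve with the primes p <= M sifts any
   interval of length N down to at most N / G + M^2 survivors, where
   G = \sum_{d squarefree, d <= M} 1/phi(d) dominates the harmonic sum
   1 + 1/2 + ... + 1/M >= ln (M + 1).  Every prime in (x, x + y] larger than M
   survives, so pi(x + y) - pi(x) <= M + (y + 1) / ln (M + 1) + M^2.  Choosing
   M = sqrt y / ln y makes ln (M + 1) >= (ln y) / 2 - ln ln y, and the main term
   becomes 2 y / (ln y - 2 ln ln y) = 2 y / ln y + O (y ln ln y / (ln y)^2),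
   while M + M^2 = O (y / (ln y)^2).  For ln y < 64 the trivial bound y + 1
   suffices. *)

Module SelbergSieve.
Import mathcomp.algebra_tactics.ring mathcomp.algebra_tactics.lra.
Local Open Scope ring_scope.

Section SubsetSums.
Variable R : realFieldType.
Variable I : finType.

Lemma prodr_indicator (P : pred I) :
  \prod_i (if P i then 1 else 0 : R) = ([forall i, P i])%:R.
Proof.
case: (boolP [forall i, P i]) => [/forallP H|/forallPn [j Hj]].
  by rewrite big1 // => i _; rewrite H.
by apply/eqP/prodf_eq0; exists j; rewrite ?(negbTE Hj).
Qed.

Lemma sum_subset_prod (A : {set I}) (f : I -> R) :
  \sum_(S : {set I} | S \subset A) \prod_(i in S) f i = \prod_(i in A) (1 + f i).
Proof.
rewrite big_mkcond [RHS]big_mkcond /=.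
transitivity (\prod_i ((if i \in A then f i else 0) + 1)).
  rewrite bigA_distr; apply: eq_bigr => S _.
  case: (boolP (S \subset A)) => [/subsetP SA|/subsetPn [j jS jA]].
    rewrite big_mkcond; apply: eq_bigr => i _.
    by case: (boolP (i \in S)) => // /SA ->.
  by apply/esym/eqP/prodf_eq0; exists j; rewrite ?jS ?(negbTE jA).
by apply: eq_bigr => i _; case: (i \in A); rewrite ?addr0 ?add0r // addrC.
Qed.

Lemma sum_interval_sign (U V : {set I}) : U \subset V ->
  \sum_(S : {set I} | (U \subset S) && (S \subset V)) (-1 : R) ^+ #|V :\: S|
  = (U == V)%:R.
Proof.
move=> /subsetP UV.
pose F i : R := (i \in V)%:R.
pose G i : R := if i \in U then 0 else if i \in V then -1 else 1.
have prodFG : \prod_i (F i + G i) = (U == V)%:R.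
  transitivity (\prod_i (if (i \in V) ==> (i \in U) then 1 else 0 : R)).
    apply: eq_bigr => i _; rewrite /F /G.
    case: (boolP (i \in U)) => iU; first by rewrite (UV _ iU) addr0.
    by case: (i \in V); rewrite /= ?addrN ?add0r.
  rewrite prodr_indicator eqEsubset (introT subsetP UV) /=.
  congr (nat_of_bool _)%:R; apply/forallP/subsetP => H i.
    by move=> iV; move: (H i); rewrite iV.
  by apply/implyP => /H.
rewrite -prodFG bigA_distr big_mkcond; apply: eq_bigr => S _.
rewrite -prodr_const.
case: (boolP (U \subset S)) => [/subsetP US|/subsetPn [j jU jS]] /=; last first.
  by apply/esym/eqP/prodf_eq0; exists j; rewrite ?(negbTE jS) /G ?jU.
case: (boolP (S \subset V)) => [/subsetP SV|/subsetPn [j jS jV]] /=; last first.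
  by apply/esym/eqP/prodf_eq0; exists j; rewrite ?jS /F ?(negbTE jV).
rewrite big_mkcond; apply: eq_bigr => i _; rewrite !inE /F /G.
case: (boolP (i \in S)) => iS /=; first by rewrite (SV _ iS).
by case: (boolP (i \in U)) => // iU; rewrite (US _ iU) in iS.
Qed.

Lemma sum_supset (S : {set I}) (F : {set I} -> R) :
  \sum_(V : {set I} | S \subset V) F V =
  \sum_(Q : {set I} | Q \subset ~: S) F (S :|: Q).
Proof.
rewrite (reindex_onto (fun Q => S :|: Q) (fun V => V :\: S)).
  apply: eq_bigl => Q; rewrite subsetUl /=.
  apply/eqP/idP => [<-|/subsetP H].
    by apply/subsetP => i; rewrite !inE => /andP[].
  apply/setP => i; rewrite !inE; case: (boolP (i \in Q)) => iQ /=.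
    by rewrite orbT andbT; move: (H _ iQ); rewrite inE.
  by case: (i \in S).
move=> V /subsetP SV; apply/setP => i; rewrite !inE.
by case: (boolP (i \in S)) => // /SV ->.
Qed.

Lemma sum_subset_split (S : {set I}) (F : {set I} -> R) :
  \sum_(W : {set I}) F W =
  \sum_(T : {set I} | T \subset S) \sum_(Q : {set I} | Q \subset ~: S) F (T :|: Q).
Proof.
rewrite (partition_big (fun W => W :&: S) (fun T => T \subset S)); last first.
  by move=> W _; apply: subsetIr.
apply: eq_bigr => T /subsetP TS.
rewrite (reindex_onto (fun Q => T :|: Q) (fun W => W :\: S)); last first.
  by move=> W /eqP <-; apply/setP => i; rewrite !inE; case: (i \in W); case: (i \in S).
apply: eq_bigl => Q /=; apply/andP/idP => [[_ /eqP <-]|/subsetP H].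
  by apply/subsetP => i; rewrite !inE => /andP[].
split; apply/eqP/setP => i; rewrite !inE; have := H i; have := TS i; rewrite !inE;
  by case: (i \in Q); case: (i \in S); case: (i \in T) => //= A B;
     first [by move: (A isT) | by move: (B isT)].
Qed.

End SubsetSums.

Lemma natr_count (R : nzSemiRingType) (T : Type) (a : pred T) (r : seq T) :
  ((count a r)%:R : R) = \sum_(n <- r) (a n)%:R.
Proof. by elim: r => [|x r IH]; rewrite ?big_nil ?big_cons //= natrD IH. Qed.

Lemma count_dvdn_iota (a N m : nat) : (0 < m)%N ->
  count (fun n => m %| n)%N (iota a.+1 N) = ((a + N) %/ m - a %/ m)%N.
Proof.
move=> m0; elim: N => [|N IH]; first by rewrite addn0 subnn.
rewrite -[N.+1]addn1 iotaD count_cat IH /= addn0 addnA addn1 divnS // -addnS.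
have : (a %/ m <= (a + N) %/ m)%N by apply: leq_div2r; apply: leq_addr.
rewrite addSn addnS; case: (m %| (a + N).+1)%N => /=; lia.
Qed.

Lemma count_dvdn_iota_error (R : realFieldType) (a N m : nat) : (0 < m)%N ->
  `|(count (fun n => m %| n)%N (iota a.+1 N))%:R - N%:R / m%:R| <= (1 : R).
Proof.
move=> m0; rewrite count_dvdn_iota //.
have le01 : (a %/ m <= (a + N) %/ m)%N by apply: leq_div2r; apply: leq_addr.
rewrite natrB //.
have e1 := divn_eq (a + N) m; have e0 := divn_eq a m.
have r1 := ltn_pmod (a + N) m0; have r0 := ltn_pmod a m0.
set q1 := ((a + N) %/ m)%N in e1 le01 *; set q0 := (a %/ m)%N in e0 le01 *.
set s1 := ((a + N) %% m)%N in e1 r1; set s0 := (a %% m)%N in e0 r0.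
have eN : (N%:R : R) = (q1%:R - q0%:R) * m%:R + s1%:R - s0%:R.
  have h1 : ((a + N)%:R : R) = q1%:R * m%:R + s1%:R by rewrite {1}e1 natrD natrM.
  have h0 : ((a)%:R : R) = q0%:R * m%:R + s0%:R by rewrite {1}e0 natrD natrM.
  rewrite natrD h0 in h1; lra.
have mpos : (0 : R) < m%:R by rewrite ltr0n.
have hs1 : (s1%:R : R) < m%:R by rewrite ltr_nat.
have hs0 : (s0%:R : R) < m%:R by rewrite ltr_nat.
have g1 : (0 : R) <= s1%:R by rewrite ler0n.
have g0 : (0 : R) <= s0%:R by rewrite ler0n.
have -> : (q1%:R - q0%:R : R) - N%:R / m%:R = (s0%:R - s1%:R) / m%:R.
  by rewrite eN; field; rewrite gt_eqF.
rewrite normrM normfV (gtr0_norm mpos) ler_pdivrMr // mul1r.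
by rewrite ler_norml; apply/andP; split; lra.
Qed.

Section Selberg.
Variable I : finType.
Variable p : I -> nat.
Hypothesis p_prime : forall i, prime (p i).
Hypothesis p_inj : injective p.
Implicit Types S T U V Q W : {set I}.

Definition pprod S : nat := (\prod_(i in S) p i)%N.

Lemma pprod_gt0 S : (0 < pprod S)%N.
Proof. by rewrite /pprod prodn_gt0 // => i; rewrite prime_gt0. Qed.

Lemma dvdn_pprod S j : (p j %| pprod S)%N = (j \in S).
Proof.
rewrite /pprod Euclid_dvd_prod // big_orE.
apply/existsP/idP => [[i /andP[iS]]|jS]; last by exists j; rewrite jS dvdnn.
by rewrite dvdn_prime2 // => /eqP/p_inj ->.
Qed.

Lemma pprod_inj S T : pprod S = pprod T -> S = T.
Proof. by move=> E; apply/setP => j; rewrite -!dvdn_pprod E. Qed.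

Lemma pprod_dvdn S n : (pprod S %| n)%N = [forall i in S, p i %| n]%N.
Proof.
apply/idP/idP.
  move=> H; apply/forall_inP => i iS; apply: dvdn_trans H.
  by rewrite dvdn_pprod.
move: {2}#|S| (erefl #|S|) => k; elim: k S => [|k IH] S cS H.
  by move: cS => /eqP; rewrite cards_eq0 => /eqP ->; rewrite /pprod big_set0 dvd1n.
have : (0 < #|S|)%N by rewrite cS.
rewrite card_gt0 => /set0Pn [j jS].
rewrite /pprod (big_setD1 j jS) /= Gauss_dvd.
  apply/andP; split; first by move/forall_inP: H; apply.
  apply: (IH (S :\ j)); first by rewrite (cardsD1 j S) jS in cS; case: cS.
  by apply/forall_inP => i; rewrite !inE => /andP[_ iS]; move/forall_inP: H; apply.
rewrite prime_coprime //; have := dvdn_pprod (S :\ j) j; rewrite /pprod => ->.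
by rewrite !inE eqxx.
Qed.

Lemma pprod_subset S T : S \subset T -> (pprod S <= pprod T)%N.
Proof.
move=> ST; rewrite /pprod [X in (_ <= X)%N](big_setID S) /=.
rewrite (setIidPr ST); apply: leq_pmulr.
by rewrite prodn_gt0 // => i; rewrite prime_gt0.
Qed.

Lemma pprodUI S T : (pprod (S :|: T) * pprod (S :&: T) = pprod S * pprod T)%N.
Proof.
rewrite /pprod !(big_mkcond (fun i => i \in _)) -!big_split /=.
apply: eq_bigr => i _; rewrite !inE.
by case: (i \in S); case: (i \in T); rewrite /= ?muln1 ?mul1n.
Qed.

Definition pdivisors (n : nat) : {set I} := [set i | p i %| n]%N.

Lemma subset_pdivisors W n : (W \subset pdivisors n) = (pprod W %| n)%N.
Proof.
rewrite pprod_dvdn; apply/subsetP/forall_inP => H i iW.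
  by move: (H _ iW); rewrite inE.
by rewrite inE; apply: H.
Qed.

Variable R : realFieldType.
Variable M : nat.
Hypothesis M_gt0 : (0 < M)%N.

(* [admissible S] means that the squarefree number [pprod S] lies in the sieve
   support [1, M]; [phi S] is the Euler totient of [pprod S]. *)
Definition admissible S := (pprod S <= M)%N.
Definition phi S : R := \prod_(i in S) (p i).-1%:R.
Definition phi_inv S : R := \prod_(i in S) ((p i).-1%:R)^-1.
Definition selberg_G : R := \sum_(S : {set I} | admissible S) phi_inv S.

(* The optimal Selberg weights: [selberg_y V] is mu(d) / (phi(d) G) for
   [d = pprod V], and [selberg_lambda] is obtained from it by Moebius
   inversion. *)
Definition selberg_y V : R :=
  if admissible V then (-1) ^+ #|V| * phi_inv V / selberg_G else 0.
Definition selberg_lambda S : R :=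
  (pprod S)%:R * \sum_(V : {set I} | S \subset V) (-1) ^+ #|V :\: S| * selberg_y V.

Lemma predp_neq0 i : ((p i).-1%:R : R) != 0.
Proof. by rewrite pnatr_eq0 -lt0n -ltnS prednK ?prime_gt1 ?prime_gt0. Qed.

Lemma natr_p i : ((p i)%:R : R) = (p i).-1%:R + 1.
Proof. by rewrite -[in LHS](prednK (prime_gt0 (p_prime i))) -natr1. Qed.

Lemma pprod_neq0 S : ((pprod S)%:R : R) != 0.
Proof. by rewrite pnatr_eq0 -lt0n pprod_gt0. Qed.

Lemma phi_inv_ge0 S : 0 <= phi_inv S.
Proof. by apply: prodr_ge0 => i _; rewrite invr_ge0 ler0n. Qed.

Lemma phi_mul_inv S : phi S * phi_inv S = 1.
Proof.
by rewrite /phi /phi_inv -big_split /= big1 // => i _; rewrite divff ?predp_neq0.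
Qed.

Lemma phi_invU T Q : [disjoint T & Q] -> phi_inv (T :|: Q) = phi_inv T * phi_inv Q.
Proof.
move=> /pred0P TQ; rewrite /phi_inv !(big_mkcond (fun i => i \in _)) -big_split /=.
apply: eq_bigr => i _; rewrite !inE; have := TQ i; rewrite /= => /negbT.
by rewrite negb_and; case: (i \in T); case: (i \in Q); rewrite /= ?mul1r ?mulr1.
Qed.

Lemma sum_subset_phi S : \sum_(U : {set I} | U \subset S) phi U = (pprod S)%:R.
Proof.
rewrite /phi sum_subset_prod /pprod natr_prod; apply: eq_bigr => i _.
by rewrite natr_p addrC.
Qed.

Lemma pprod_mul_phi_inv S : (pprod S)%:R * phi_inv S = \sum_(T : {set I} | T \subset S) phi_inv T.
Proof.
rewrite /phi_inv sum_subset_prod /pprod natr_prod -big_split /=; apply: eq_bigr => i _.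
by rewrite natr_p mulrDl mulfV ?predp_neq0 // mul1r addrC.
Qed.

Lemma admissible0 : admissible set0.
Proof. by rewrite /admissible /pprod big_set0. Qed.

Lemma admissible_subset S T : S \subset T -> admissible T -> admissible S.
Proof. by move=> /pprod_subset ST; rewrite /admissible => /(leq_trans ST). Qed.

Lemma selberg_G_ge1 : 1 <= selberg_G.
Proof.
rewrite /selberg_G (bigD1 set0) ?admissible0 //= /phi_inv big_set0 lerDl.
by apply: sumr_ge0 => S _; apply: phi_inv_ge0.
Qed.

Lemma selberg_G_gt0 : 0 < selberg_G.
Proof. exact: lt_le_trans selberg_G_ge1. Qed.

Lemma selberg_lambda0 : selberg_lambda set0 = 1.
Proof.
rewrite /selberg_lambda /pprod big_set0 mul1r.
transitivity (\sum_(V : {set I} | admissible V) phi_inv V / selberg_G); last first.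
  by rewrite -mulr_suml divff // gt_eqF // selberg_G_gt0.
rewrite (big_mkcond (fun V => set0 \subset V)) (big_mkcond admissible).
apply: eq_bigr => V _; rewrite sub0set setD0 /selberg_y.
case: (admissible V); last by rewrite mulr0.
by rewrite !mulrA -expr2 sqrr_sign mul1r.
Qed.

Lemma selberg_lambda_eq0 S : ~~ admissible S -> selberg_lambda S = 0.
Proof.
move=> nS; rewrite /selberg_lambda big1 ?mulr0 // => V SV.
rewrite /selberg_y; case: (boolP (admissible V)) => aV; last by rewrite mulr0.
by move: nS; rewrite (admissible_subset SV aV).
Qed.

Lemma sum_supset_selberg_lambda U :
  \sum_(S : {set I}) (U \subset S)%:R * (selberg_lambda S / (pprod S)%:R) = selberg_y U.
Proof.
transitivity (\sum_(S : {set I} | U \subset S) selberg_lambda S / (pprod S)%:R).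
  rewrite [RHS]big_mkcond; apply: eq_bigr => S _.
  by case: (U \subset S); rewrite /= ?mul1r ?mul0r.
under eq_bigr => S _ do rewrite /selberg_lambda mulrC mulrA mulVf ?pprod_neq0 // mul1r.
rewrite (exchange_big_dep predT) //=.
transitivity (\sum_(V : {set I}) selberg_y V * (U == V)%:R); last first.
  rewrite (bigD1 U) //= eqxx mulr1 big1 ?addr0 // => V /negbTE.
  by rewrite eq_sym => ->; rewrite mulr0.
apply: eq_bigr => V _.
case: (boolP (U \subset V)) => UV.
  by rewrite -sum_interval_sign // mulr_sumr; apply: eq_bigr => S _; rewrite mulrC.
rewrite big_pred0 ?mulr0; last first.
  by move=> S; apply/negP => /andP[US SV]; move: UV; rewrite (subset_trans US SV).
have /negbTE -> : U != V by apply: contraNneq UV => ->; rewrite subxx.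
by rewrite mulr0.
Qed.

Lemma inv_pprodU S T : ((pprod (S :|: T))%:R : R)^-1 =
  ((pprod S)%:R)^-1 * ((pprod T)%:R)^-1 * \sum_(U : {set I} | U \subset S :&: T) phi U.
Proof.
rewrite sum_subset_phi.
have -> : ((pprod (S :&: T))%:R : R) =
    (pprod S)%:R * (pprod T)%:R / (pprod (S :|: T))%:R.
  apply: (mulIf (pprod_neq0 (S :|: T))); rewrite mulfVK ?pprod_neq0 //.
  by rewrite mulrC -!natrM pprodUI.
have h1 := pprod_neq0 S; have h2 := pprod_neq0 T; have h3 := pprod_neq0 (S :|: T).
by field; rewrite h1 h2 h3.
Qed.

(* Diagonalisation: with [1/[d,e] = (1/d)(1/e) \sum_{f | (d,e)} phi f] the form
   becomes \sum_(U : {set I}) phi U * y_U^2 = 1 / G. *)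
Lemma selberg_quadratic_form :
  \sum_(S : {set I}) \sum_(T : {set I}) selberg_lambda S * selberg_lambda T / (pprod (S :|: T))%:R =
  selberg_G^-1.
Proof.
pose c S U : R := (U \subset S)%:R * (selberg_lambda S / (pprod S)%:R).
have G_neq0 : selberg_G != 0 by rewrite gt_eqF // selberg_G_gt0.
transitivity (\sum_(U : {set I}) phi U * selberg_y U ^+ 2).
  transitivity (\sum_(S : {set I}) \sum_(T : {set I}) \sum_(U : {set I}) c S U * c T U * phi U).
    apply: eq_bigr => S _; apply: eq_bigr => T _.
    rewrite inv_pprodU big_mkcond !mulr_sumr; apply: eq_bigr => U _.
    by rewrite /c subsetI; case: (U \subset S); case: (U \subset T); rewrite /=; ring.
  under eq_bigr => S _ do rewrite exchange_big.
  rewrite exchange_big /=; apply: eq_bigr => U _.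
  rewrite expr2 -!sum_supset_selberg_lambda mulr_suml mulr_sumr.
  by apply: eq_bigr => S _; rewrite !mulr_sumr; apply: eq_bigr => T _; rewrite /c; ring.
transitivity (\sum_(U : {set I} | admissible U) phi_inv U / selberg_G ^+ 2).
  rewrite [RHS]big_mkcond; apply: eq_bigr => U _; rewrite /selberg_y.
  case: (admissible U); last by rewrite expr0n /= mulr0.
  rewrite !exprMn sqrr_sign mul1r mulrA expr2 (mulrA (phi U)) phi_mul_inv mul1r.
  by rewrite exprVn.
by rewrite -mulr_suml -/selberg_G; field.
Qed.

Lemma pprod_mul_sum_supset_le_G S :
  (pprod S)%:R * \sum_(V : {set I} | (S \subset V) && admissible V) phi_inv V <= selberg_G.
Proof.
rewrite big_mkcondr /= sum_supset.
have split_weight : forall Q, Q \subset ~: S -> (if admissible (S :|: Q) then phi_inv (S :|: Q) else 0)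
    = phi_inv S * ((admissible (S :|: Q))%:R * phi_inv Q).
  move=> Q QS; rewrite phi_invU; last by rewrite disjoint_sym disjoints_subset.
  by case: (admissible _); rewrite /= ?mul1r ?mul0r ?mulr0.
rewrite (eq_bigr _ split_weight) -mulr_sumr mulrA pprod_mul_phi_inv mulr_suml.
rewrite /selberg_G [X in _ <= X]big_mkcond [X in _ <= X](sum_subset_split S) /=.
apply: ler_sum => T TS; rewrite mulr_sumr; apply: ler_sum => Q QS.
have TQ : [disjoint T & Q].
  by rewrite disjoint_sym disjoints_subset (subset_trans QS) // setCS.
rewrite phi_invU //.
case: (boolP (admissible (S :|: Q))) => aSQ; last first.
  by rewrite mul0r mulr0; case: (admissible _); rewrite // mulr_ge0 ?phi_inv_ge0.
by rewrite (admissible_subset (setSU Q TS) aSQ) mul1r.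
Qed.

Lemma selberg_lambda_le1 S : `|selberg_lambda S| <= 1.
Proof.
rewrite /selberg_lambda normrM ger0_norm ?ler0n //.
apply: le_trans (_ : (pprod S)%:R *
  (\sum_(V : {set I} | (S \subset V) && admissible V) phi_inv V / selberg_G) <= 1).
  apply: ler_wpM2l; first by rewrite ler0n.
  apply: le_trans (ler_norm_sum _ _ _) _.
  rewrite [X in _ <= X]big_mkcondr /=.
  apply: ler_sum => V _; rewrite normrM normr_sign mul1r /selberg_y.
  case: (admissible V); last by rewrite normr0.
  rewrite -mulrA normrM normr_sign mul1r ger0_norm //.
  by rewrite divr_ge0 ?phi_inv_ge0 // ltW // selberg_G_gt0.
rewrite -mulr_suml mulrA ler_pdivrMr ?selberg_G_gt0 // mul1r.
exact: pprod_mul_sum_supset_le_G.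
Qed.

Lemma card_admissible : (#|[set S | admissible S]| <= M)%N.
Proof.
pose f S : 'I_M.+1 := inord (pprod S).
have f_inj : {in [set S | admissible S] &, injective f}.
  move=> S T; rewrite !inE /admissible => aS aT E; apply: pprod_inj.
  by have := congr1 (@nat_of_ord _) E; rewrite /f !inordK ?ltnS.
rewrite -(card_in_imset f_inj).
have : f @: [set S | admissible S] \subset [set~ ord0].
  apply/subsetP => x /imsetP [S]; rewrite inE /admissible => aS ->; rewrite !inE /f.
  apply/eqP => /(congr1 (@nat_of_ord _)); rewrite inordK ?ltnS //= => h.
  by have := pprod_gt0 S; rewrite h.
by move/subset_leq_card; rewrite cardsC1 card_ord.
Qed.

Lemma sum_normr_selberg_lambda :
  \sum_(S : {set I}) `|selberg_lambda S| <= (#|[set S | admissible S]|)%:R.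
Proof.
rewrite -sum1_card natr_sum [X in _ <= X]big_mkcond /=; apply: ler_sum => S _.
rewrite inE; case: (boolP (admissible S)) => aS; first exact: selberg_lambda_le1.
by rewrite selberg_lambda_eq0 // normr0.
Qed.

Lemma sqr_sum_selberg_lambda n :
  (\sum_(S : {set I} | S \subset pdivisors n) selberg_lambda S) ^+ 2 =
  \sum_(S : {set I}) \sum_(T : {set I}) selberg_lambda S * selberg_lambda T * (pprod (S :|: T) %| n)%N%:R.
Proof.
rewrite expr2 big_mkcond mulr_suml; apply: eq_bigr => S _.
rewrite big_mkcond mulr_sumr; apply: eq_bigr => T _ /=.
rewrite -subset_pdivisors subUset.
by case: (S \subset _); case: (T \subset _); rewrite /= ?mul0r ?mulr0 ?mulr1 ?mul1r.
Qed.

Definition sifted (n : nat) := [forall i, ~~ (p i %| n)%N].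

(* Since [lambda set0 = 1], every sifted [n] contributes 1 to the sum of
   squares on the right. *)
Lemma count_sifted_le_sum_sqr (s : seq nat) :
  (count sifted s)%:R <=
  \sum_(n <- s) (\sum_(S : {set I} | S \subset pdivisors n) selberg_lambda S) ^+ 2.
Proof.
rewrite natr_count; apply: ler_sum => n _.
case: (boolP (sifted n)) => H /=; last exact: sqr_ge0.
have -> : pdivisors n = set0.
  by apply/setP => i; rewrite !inE; move/forallP: H => /(_ i) /negbTE.
by rewrite (big_pred1 set0) ?selberg_lambda0 ?expr1n // => S; exact: subset0.
Qed.

Theorem selberg_sieve (a N : nat) :
  (count sifted (iota a.+1 N))%:R <= N%:R / selberg_G + M%:R ^+ 2.
Proof.
apply: le_trans (count_sifted_le_sum_sqr _) _.
under eq_bigr => n _ do rewrite sqr_sum_selberg_lambda.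
rewrite exchange_big; under eq_bigr => S _ do rewrite exchange_big.
pose lam2 S T := selberg_lambda S * selberg_lambda T.
pose d S T := (pprod (S :|: T))%:R : R.
have main_error S T : \sum_(n <- iota a.+1 N) lam2 S T * (pprod (S :|: T) %| n)%N%:R
   = lam2 S T * (N%:R / d S T) +
     lam2 S T * ((count (dvdn (pprod (S :|: T))) (iota a.+1 N))%:R - N%:R / d S T).
  by rewrite -mulr_sumr -natr_count; ring.
under eq_bigr => S _ do under eq_bigr => T _ do rewrite main_error.
under eq_bigr => S _ do rewrite big_split /=.
rewrite big_split /=; apply: lerD.
  rewrite -selberg_quadratic_form mulr_sumr le_eqVlt; apply/orP; left; apply/eqP.
  by apply: eq_bigr => S _; rewrite mulr_sumr; apply: eq_bigr => T _; rewrite /lam2 /d; ring.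
apply: le_trans (_ : \sum_(S : {set I}) \sum_(T : {set I}) `|selberg_lambda S| * `|selberg_lambda T| <= _).
  apply: ler_sum => S _; apply: ler_sum => T _.
  apply: le_trans (ler_norm _) _; rewrite !normrM.
  rewrite -[X in _ <= X]mulr1 ler_wpM2l ?mulr_ge0 //.
  exact/count_dvdn_iota_error/pprod_gt0.
have -> : \sum_(S : {set I}) \sum_(T : {set I}) `|selberg_lambda S| * `|selberg_lambda T| =
    (\sum_(S : {set I}) `|selberg_lambda S|) ^+ 2.
  by rewrite expr2 mulr_suml; apply: eq_bigr => S _; rewrite mulr_sumr.
rewrite ler_pXn2r // ?nnegrE ?sumr_ge0 ?ler0n //.
apply: le_trans sum_normr_selberg_lambda _.
by rewrite ler_nat card_admissible.
Qed.

End Selberg.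

Lemma sum_inv_powers_le (R : realFieldType) (q J : nat) : (1 < q)%N ->
  \sum_(j < J) ((q%:R : R)^-1) ^+ j.+1 <= (q.-1%:R)^-1.
Proof.
move=> q1; have q_gt0 : (0 : R) < q%:R by rewrite ltr0n; lia.
have q1_gt0 : (0 : R) < q.-1%:R by rewrite ltr0n; lia.
have q_pred : (q%:R : R) = q.-1%:R + 1 by rewrite natr1 prednK //; lia.
elim: J => [|J IH]; first by rewrite big_ord0 invr_ge0 ltW.
rewrite big_ord_recl expr1.
under eq_bigr => j _ do rewrite /= exprS.
rewrite -mulr_sumr.
apply: le_trans (_ : (q%:R : R)^-1 + (q%:R)^-1 * (q.-1%:R)^-1 <= _).
  by rewrite lerD2l ler_wpM2l // invr_ge0 ltW.
by rewrite q_pred le_eqVlt; apply/orP; left; apply/eqP; field; rewrite -q_pred !gt_eqF.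
Qed.

Section HarmonicLowerBound.
Variable R : realFieldType.
Variable M : nat.

Definition primes_upto := {x : 'I_M.+1 | prime x}.
Definition prime_val (i : primes_upto) : nat := val (val i).
Lemma prime_val_prime i : prime (prime_val i). Proof. exact: (valP i). Qed.
Lemma prime_val_inj : injective prime_val. Proof. by move=> i j /val_inj /val_inj. Qed.

(* An exponent vector [f] encodes the integer \prod_p p ^ f p; [monomial f] is
   its reciprocal. *)
Definition monomial (f : {ffun primes_upto -> 'I_M.+1}) : R :=
  \prod_i ((prime_val i)%:R^-1) ^+ f i.
Definition exponent_support (f : {ffun primes_upto -> 'I_M.+1}) : {set primes_upto} :=
  [set i | f i != ord0].

Lemma monomial_ge0 f : 0 <= monomial f.
Proof. by apply: prodr_ge0 => i _; rewrite exprn_ge0 // invr_ge0 ler0n. Qed.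

Lemma prod_sum_inv_powers (S : {set primes_upto}) :
  \prod_(i in S) \sum_(j < M) ((prime_val i)%:R^-1) ^+ j.+1 =
  \sum_(f : {ffun primes_upto -> 'I_M.+1}) (exponent_support f == S)%:R * monomial f.
Proof.
rewrite big_mkcond /=.
transitivity (\prod_i \sum_(j : 'I_M.+1)
    ((((i \in S) == (j != ord0))%:R : R) * ((prime_val i)%:R^-1) ^+ j)).
  apply: eq_bigr => i _; rewrite big_ord_recl /=.
  case: (i \in S) => /=.
    by rewrite mul0r add0r; apply: eq_bigr => j _; rewrite mul1r /bump leq0n add1n.
  by rewrite mul1r expr0 big1 ?addr0 // => j _; rewrite mul0r.
rewrite bigA_distr_bigA; apply: eq_bigr => f _.
rewrite big_split /= /monomial; congr (_ * _).
have -> : (exponent_support f == S) = [forall i, (i \in S) == (f i != ord0)].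
  apply/eqP/forallP => [<- i|H]; first by rewrite inE.
  by apply/setP => i; rewrite inE; move: (H i) => /eqP ->.
by rewrite -prodr_indicator; apply: eq_bigr => i _; case: (_ == _).
Qed.

(* Expanding each factor 1/(p-1) = \sum_k p^-k of [selberg_G] into a
   geometric series. *)
Lemma sum_monomial_admissible_le_G :
  \sum_(f : {ffun primes_upto -> 'I_M.+1})
    (admissible prime_val M (exponent_support f))%:R * monomial f
  <= selberg_G prime_val R M.
Proof.
rewrite /selberg_G.
apply: le_trans (_ : \sum_(S : {set primes_upto} | admissible prime_val M S)
  \prod_(i in S) \sum_(j < M) ((prime_val i)%:R^-1) ^+ j.+1 <= _); last first.
  apply: ler_sum => S _; apply: ler_prod => i _; apply/andP; split.
    by apply: sumr_ge0 => j _; rewrite exprn_ge0 // invr_ge0 ler0n.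
  exact/sum_inv_powers_le/prime_gt1/prime_val_prime.
under [X in _ <= X]eq_bigr => S _ do rewrite prod_sum_inv_powers.
rewrite exchange_big /=; apply: ler_sum => f _.
case: (boolP (admissible _ _ (exponent_support f))) => af; last first.
  by rewrite mul0r sumr_ge0 // => S _; rewrite mulr_ge0 ?ler0n ?monomial_ge0.
rewrite (bigD1 (exponent_support f)) //= eqxx mul1r big1 ?addr0 // => S /andP[_ /negbTE].
by rewrite eq_sym => ->; rewrite mul0r.
Qed.

Lemma prod_primes_upto_logn (m : nat) : (0 < m)%N -> (m <= M)%N ->
  (\prod_(i : primes_upto) prime_val i ^ logn (prime_val i) m)%N = m.
Proof.
move=> m0 mM; rewrite -[RHS](partnT m0) (widen_partn _ mM).
have -> : (\prod_(i : primes_upto) prime_val i ^ logn (prime_val i) m)%N =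
          (\prod_(x : 'I_M.+1 | prime x) x ^ logn x m)%N.
  symmetry; rewrite (reindex_omap (val : primes_upto -> 'I_M.+1) insub); last first.
    by move=> i Pi; rewrite insubT.
  by apply: eq_bigl => -[i iA] /=; rewrite insubT ?iA /= eqxx.
rewrite big_mkcond /=.
rewrite -(big_mkord predT (fun q => if prime q then q ^ logn q m else 1)%N).
apply: eq_bigr => q _; case: (boolP (prime q)) => // np.
suff -> : logn q m = 0%N by [].
by apply/eqP; rewrite -leqn0 leqNgt logn_gt0 mem_primes (negbTE np).
Qed.

Definition exponents (n : 'I_M) : {ffun primes_upto -> 'I_M.+1} :=
  [ffun i => inord (logn (prime_val i) n.+1)].

Lemma exponentsE (n : 'I_M) i : nat_of_ord (exponents n i) = logn (prime_val i) n.+1.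
Proof.
rewrite ffunE inordK //; apply: leq_trans (ltn_logl _ (ltn0Sn n)) _.
by rewrite ltnS ltnW.
Qed.

Lemma prod_exponents (n : 'I_M) :
  (\prod_(i : primes_upto) prime_val i ^ exponents n i)%N = n.+1.
Proof.
rewrite -[RHS](prod_primes_upto_logn (ltn0Sn n) (ltn_ord n)).
by apply: eq_bigr => i _; rewrite exponentsE.
Qed.

Lemma monomial_exponents (n : 'I_M) : monomial (exponents n) = ((n.+1)%:R)^-1.
Proof.
rewrite /monomial -(prod_exponents n) natr_prod -prodfV; apply: eq_bigr => i _.
by rewrite exprVn natrX.
Qed.

Lemma admissible_exponents (n : 'I_M) :
  admissible prime_val M (exponent_support (exponents n)).
Proof.
rewrite /admissible; apply: leq_trans (ltn_ord n).
rewrite dvdn_leq // (pprod_dvdn prime_val_prime prime_val_inj).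
apply/forall_inP => i; rewrite inE => /eqP H.
have : (0 < logn (prime_val i) n.+1)%N.
  by rewrite lt0n -exponentsE; apply/eqP => h; apply: H; apply: ord_inj; rewrite h.
by rewrite logn_gt0 mem_primes => /and3P[].
Qed.

Lemma exponents_inj : injective exponents.
Proof.
move=> n m E; apply/val_inj/eqP; rewrite -eqSS; apply/eqP.
by rewrite -prod_exponents -(prod_exponents m) E.
Qed.

Lemma harmonic_le_selberg_G :
  \sum_(n < M) ((n.+1)%:R : R)^-1 <= selberg_G prime_val R M.
Proof.
apply: le_trans sum_monomial_admissible_le_G.
have -> : \sum_(n < M) ((n.+1)%:R : R)^-1 =
    \sum_(f in exponents @: [set: 'I_M]) monomial f.
  rewrite big_imset /=; last by move=> x y _ _; apply: exponents_inj.
  by apply: eq_big => [n|n _]; rewrite ?in_setT // monomial_exponents.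
rewrite [X in X <= _]big_mkcond /=; apply: ler_sum => f _.
case: (boolP (f \in exponents @: [set: 'I_M])) => [/imsetP [n _ ->]|_].
  by rewrite admissible_exponents mul1r.
by rewrite mulr_ge0 ?ler0n ?monomial_ge0.
Qed.

End HarmonicLowerBound.

Theorem sieve_primes_upto (R : realFieldType) (M a N : nat) : (0 < M)%N ->
  (count (sifted (@prime_val M)) (iota a.+1 N))%:R
    <= N%:R / (\sum_(n < M) ((n.+1)%:R : R)^-1) + M%:R ^+ 2.
Proof.
move=> M_gt0.
apply: le_trans (selberg_sieve (@prime_val_prime M) (@prime_val_inj M) R M_gt0 a N) _.
have harmonic_ge1 : 1 <= \sum_(n < M) ((n.+1)%:R : R)^-1.
  case: M M_gt0 => // M' _; rewrite big_ord_recl /= invr1 lerDl.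
  by apply: sumr_ge0 => n _; rewrite invr_ge0 ler0n.
rewrite lerD2r ler_wpM2l ?ler0n // lef_pV2 ?posrE ?harmonic_le_selberg_G //.
  by apply: selberg_G_gt0.
exact: lt_le_trans ltr01 harmonic_ge1.
Qed.

End SelbergSieve.
Import SelbergSieve.

Local Open Scope ring_scope.
Definition harmonic (M : nat) : R := \sum_(n < M) ((n.+1)%:R : R)^-1.
Local Close Scope ring_scope.
Open Scope R_scope.

Lemma sieve_primes_upto_R (M a N : nat) : (0 < M)%N ->
  INR (count (sifted (@prime_val M)) (iota a.+1 N))
    <= INR N / harmonic M + INR M ^ 2.
Proof.
by move=> M_gt0; have /RleP := sieve_primes_upto R a N M_gt0; rewrite -!INRE -RpowE.
Qed.

Lemma ln_le x y : 0 < x -> x <= y -> ln x <= ln y.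
Proof.
move=> x0 [xy|->]; last exact: Rle_refl.
exact/Rlt_le/ln_increasing.
Qed.

(* ln (n + 1) - ln n = ln (1 + 1/n) <= 1/n *)
Lemma ln_le_harmonic (M : nat) : ln (INR M + 1) <= harmonic M.
Proof.
elim: M => [|M IH].
  by rewrite /harmonic big_ord0 /= Rplus_0_l ln_1; apply: Rle_refl.
rewrite /harmonic big_ord_recr -/(harmonic M).
have -> : GRing.natmul (GRing.one R) M.+1 = INR M.+1 by rewrite INRE.
change (ln (INR M.+1 + 1) <= harmonic M + / INR M.+1).
rewrite S_INR; set a := INR M + 1.
have a1 : 1 <= a by rewrite /a; have := pos_INR M; lra.
have a_inv_gt0 := Rinv_0_lt_compat a ltac:(lra).
have -> : a + 1 = a * (1 + / a) by field; lra.
rewrite ln_mult; [|lra|lra].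
apply: Rplus_le_compat => //.
rewrite -[X in _ <= X](ln_exp (/ a)); apply: ln_le; first lra.
exact: exp_ineq1_le.
Qed.

Definition primeb (k : nat) : bool := if prime_dec (Z.of_nat k) then true else false.

Lemma seq_iota s n : List.seq s n = iota s n.
Proof. by elim: n s => [|n IH] s //=; rewrite IH. Qed.

Lemma length_filter_count (f : nat -> bool) l : length (List.filter f l) = count f l.
Proof. by elim: l => [|a l IH] //=; case: (f a) => /=; rewrite IH. Qed.

Lemma prime_count_nat_split X Y : (X <= Y)%N ->
  prime_count_nat Y = (prime_count_nat X + count primeb (iota X.+1 (Y - X)))%N.
Proof.
move=> XY; rewrite /prime_count_nat -{1}(subnKC XY) seq_app filter_app length_app.
rewrite !length_filter_count !seq_iota; congr addn.
by apply: eq_count => k; rewrite /primeb; case: prime_dec.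
Qed.

Lemma primeb_sifted M n : primeb n -> (M < n)%N -> sifted (@prime_val M) n.
Proof.
rewrite /primeb; case: prime_dec => [n_prime|//] _ Mn; apply/forallP => i; apply/negP.
case/dvdnP => k Ek.
have pi_dvd : (Z.of_nat (prime_val i) | Z.of_nat n)%Z.
  by exists (Z.of_nat k); rewrite Ek Nat2Z.inj_mul.
have pi1 := prime_gt1 (prime_val_prime i).
have piM : (prime_val i <= M)%N by rewrite /prime_val -ltnS; apply: ltn_ord.
case: (prime_divisors _ n_prime _ pi_dvd) => [h|[h|[h|h]]]; lia.
Qed.

Lemma count_leq_iota X L M : (count (fun n => n <= M)%N (iota X.+1 L) <= M)%N.
Proof.
suff : forall s, (count (fun n => n <= M)%N (iota s L) <= M.+1 - s)%N.
  by move=> /(_ X.+1); lia.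
elim: L => [|L IH] s /=; first lia.
have := IH s.+1; case: (leqP s M) => h /=; lia.
Qed.

Lemma count_primeb_le_sifted X L M :
  (count primeb (iota X.+1 L) <= M + count (sifted (@prime_val M)) (iota X.+1 L))%N.
Proof.
set small := (fun n => n <= M)%N; set b := sifted (@prime_val M).
apply: leq_trans (_ : count (predU small b) (iota X.+1 L) <= _)%N.
  apply: sub_count => n pn; rewrite /= /small /b.
  by case: (leqP n M) => //= Mn; apply: primeb_sifted.
have := count_predUI small b (iota X.+1 L); have := count_leq_iota X L M.
rewrite -/small; lia.
Qed.

Lemma INR_Int_part (t : R) : 0 <= t -> INR (Z.to_nat (Int_part t)) = IZR (Int_part t).
Proof.
move=> t0; rewrite INR_IZR_INZ Z2Nat.id //.
have [h1 h2] := base_Int_part t.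
have : Z.lt (Z.opp 1) (Int_part t) by apply: lt_IZR; rewrite opp_IZR; lra.
lia.
Qed.

Lemma prime_pi_diff_count (x y : R) : 0 <= x -> 0 <= y ->
  let X := Z.to_nat (Int_part x) in let Y := Z.to_nat (Int_part (x + y)) in
  (X <= Y)%N /\ INR (Y - X) <= y + 1 /\
  INR (prime_pi (x + y)) - INR (prime_pi x) = INR (count primeb (iota X.+1 (Y - X))).
Proof.
move=> x0 y0 X Y.
have eX := INR_Int_part x0.
have eY : INR Y = IZR (Int_part (x + y)) by apply: INR_Int_part; lra.
have [hx1 hx2] := base_Int_part x; have [hy1 hy2] := base_Int_part (x + y).
have XY : (X <= Y)%N.
  apply/ssrnat.leP; apply: INR_le; rewrite eX eY.
  have : Z.lt (Int_part x) (Z.add (Int_part (x + y)) 1).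
    by apply: lt_IZR; rewrite plus_IZR; lra.
  by move=> h; apply: IZR_le; lia.
split=> //; split.
  by rewrite minus_INR; [rewrite eX eY; lra | apply/ssrnat.leP].
by rewrite /prime_pi -/X -/Y (prime_count_nat_split XY) plus_INR; lra.
Qed.

Lemma prime_pi_diff_le_length x y : 0 <= x -> 0 <= y ->
  INR (prime_pi (x + y)) - INR (prime_pi x) <= y + 1.
Proof.
move=> x0 y0; have [XY [hN ->]] := prime_pi_diff_count x0 y0.
apply: Rle_trans hN; apply/le_INR/ssrnat.leP.
by apply: leq_trans (count_size _ _) _; rewrite size_iota.
Qed.

Lemma prime_pi_diff_le_sieve x y M : 0 <= x -> 0 <= y -> (0 < M)%N ->
  INR (prime_pi (x + y)) - INR (prime_pi x) <= INR M + (y + 1) / harmonic M + INR M ^ 2.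
Proof.
move=> x0 y0 M_gt0; have [XY [hN ->]] := prime_pi_diff_count x0 y0.
set X := Z.to_nat (Int_part x); set Y := Z.to_nat (Int_part (x + y)).
have hsplit := le_INR _ _ (ssrnat.leP (count_primeb_le_sifted X (Y - X) M)).
rewrite plus_INR in hsplit.
have hsieve := sieve_primes_upto_R X (Y - X) M_gt0.
have hM : 1 <= INR M by apply: (le_INR 1); apply/ssrnat.leP.
have harmonic_gt0 : 0 < harmonic M.
  apply: Rlt_le_trans (ln_le_harmonic M); rewrite -ln_1; apply: ln_increasing; lra.
have : INR (Y - X)%N / harmonic M <= (y + 1) / harmonic M.
  by apply: Rmult_le_compat_r => //; apply/Rlt_le/Rinv_0_lt_compat.
lra.
Qed.

(* Sieving with the primes up to M = floor z. *)
Lemma prime_pi_diff_le_sieve_real x y z : 0 <= x -> 0 <= y -> 1 < z ->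
  INR (prime_pi (x + y)) - INR (prime_pi x) <= z + (y + 1) / ln z + z ^ 2.
Proof.
move=> x0 y0 z1.
set M := Z.to_nat (Int_part z).
have eM : INR M = IZR (Int_part z) by apply: INR_Int_part; lra.
have [hz1 hz2] := base_Int_part z.
have M_gt0 : (0 < M)%N by apply/ssrnat.ltP/INR_lt; rewrite INR_0; lra.
have lnz_gt0 : 0 < ln z by rewrite -ln_1; apply: ln_increasing; lra.
have hH : ln z <= harmonic M.
  by apply: Rle_trans (ln_le_harmonic M); apply: ln_le; lra.
have : (y + 1) / harmonic M <= (y + 1) / ln z.
  by apply: Rmult_le_compat_l; [lra | apply: Rinv_le_contravar].
have : INR M ^ 2 <= z ^ 2 by apply: pow_incr; split; [apply: pos_INR | lra].
have := prime_pi_diff_le_sieve x0 y0 M_gt0.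
lra.
Qed.

Lemma Rdiv_le_cross a b c d : 0 < b -> 0 < d -> a * d <= c * b -> a / b <= c / d.
Proof.
move=> b0 d0 h.
have -> : a / b = (a * d) * / (b * d) by field; lra.
have -> : c / d = (c * b) * / (b * d) by field; lra.
by apply: Rmult_le_compat_r => //; apply/Rlt_le/Rinv_0_lt_compat; nra.
Qed.

(* exp (-1/6) >= 5/6 gives e <= (6/5)^6 < 3. *)
Lemma exp1_lt_3 : exp 1 < 3.
Proof.
set a := exp (1 / 6).
have a0 : 0 < a by apply: exp_pos.
have ea : exp 1 = a ^ 6.
  rewrite /a -[a ^ 6]exp_ln; last by apply: pow_lt.
  by rewrite ln_pow // ln_exp; congr exp; simpl; field.
have hb : 5 / 6 <= / a.
  by rewrite /a -exp_Ropp; have := exp_ineq1_le (- (1 / 6)); lra.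
have ha : a <= 6 / 5.
  have : a * (5 / 6) <= a * / a by apply: Rmult_le_compat_l; lra.
  rewrite Rinv_r; lra.
rewrite ea; apply: Rle_lt_trans (_ : (6 / 5) ^ 6 < 3); last by simpl; lra.
by apply: pow_incr; lra.
Qed.

Lemma ln3_gt1 : 1 < ln 3.
Proof. rewrite -[1](ln_exp 1); apply: ln_increasing; [apply: exp_pos|apply: exp1_lt_3]. Qed.

Lemma exp_ge_sqr t : 0 <= t -> (1 + t / 2) ^ 2 <= exp t.
Proof.
move=> t0; have -> : exp t = exp (t / 2) * exp (t / 2) by rewrite -exp_plus; congr exp; field.
have := exp_ineq1_le (t / 2); simpl; nra.
Qed.

Lemma ln_le_quarter L : 64 <= L -> ln L <= L / 4.
Proof.
move=> L64; rewrite -[L / 4]ln_exp; apply: ln_le; first lra.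
have := @exp_ge_sqr (L / 4) ltac:(lra); simpl; nra.
Qed.

Definition short_range_constant : R := 2 * 64 ^ 2 / ln (ln 3).

Lemma prime_pi_diff_short x y : 2 <= x -> 3 <= y -> ln y < 64 ->
  INR (prime_pi (x + y)) - INR (prime_pi x)
    <= 2 * y / ln y + short_range_constant * (y * ln (ln y) / (ln y) ^ 2).
Proof.
move=> hx hy; set L := ln y; set l := ln L => hL.
have l3 := ln3_gt1.
have L3 : ln 3 <= L by apply: ln_le; lra.
have ll3 : 0 < ln (ln 3) by rewrite -ln_1; apply: ln_increasing; lra.
have ll : ln (ln 3) <= l by apply: ln_le; lra.
apply: Rle_trans (prime_pi_diff_le_length _ _) _; try lra.
have main_le : 1 <= (64 ^ 2 / L ^ 2) * (l / ln (ln 3)).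
  have h1 : 1 <= 64 ^ 2 / L ^ 2.
    apply: (Rmult_le_reg_r (L ^ 2)); first nra.
    by rewrite Rmult_1_l /Rdiv Rmult_assoc Rinv_l; [nra | apply: pow_nonzero; lra].
  have h2 : 1 <= l / ln (ln 3).
    apply: (Rmult_le_reg_r (ln (ln 3))) => //.
    by rewrite Rmult_1_l /Rdiv Rmult_assoc Rinv_l; lra.
  nra.
have -> : short_range_constant * (y * l / L ^ 2) =
    (2 * y) * ((64 ^ 2 / L ^ 2) * (l / ln (ln 3))) by rewrite /short_range_constant; field; lra.
have : 0 <= 2 * y / L by apply: Rmult_le_pos; [lra | apply/Rlt_le/Rinv_0_lt_compat; lra].
nra.
Qed.

(* The main term 2 (y + 1) / (L - 2 l) exceeds 2 y / L by
   O (y l / L^2), using L >= 4 l. *)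
Lemma long_range_arith y L l : 1 <= l -> 4 * l <= L -> L ^ 2 <= y ->
  (y + 1) / (L / 2 - l) + 2 * (y / L ^ 2) <= 2 * y / L + 11 * (y * l / L ^ 2).
Proof.
move=> l1 lL yL.
have L0 : 0 < L by lra.
set A := y / L ^ 2.
have A1 : 1 <= A.
  by rewrite /A; apply: (Rmult_le_reg_r (L ^ 2)); [nra | field_simplify; nra].
have -> : y * l / L ^ 2 = l * A by rewrite /A; field; lra.
have main_term : (y + 1) / (L / 2 - l) <= 2 * y / L + 4 / L + 8 * (l * A).
  have -> : (y + 1) / (L / 2 - l) = (2 * (y + 1)) / (L - 2 * l) by field; lra.
  have -> : 2 * y / L + 4 / L + 8 * (l * A) = (2 * y * L + 4 * L + 8 * y * l) / L ^ 2.
    by rewrite /A; field; lra.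
  apply: Rdiv_le_cross; [lra | nra |].
  have : 0 <= (L - 4 * l) * (4 * y * l + 2 * L) by apply: Rmult_le_pos; nra.
  simpl; nra.
have small_term : 4 / L <= l * A.
  have -> : l * A = y * l / L ^ 2 by rewrite /A; field; lra.
  apply: Rdiv_le_cross; [lra | nra |].
  have : y * L <= y * l * L by apply: Rmult_le_compat_r; nra.
  have : L ^ 2 * L <= y * L by apply: Rmult_le_compat_r; lra.
  simpl; nra.
nra.
Qed.

Lemma prime_pi_diff_long x y : 2 <= x -> 3 <= y -> 64 <= ln y ->
  INR (prime_pi (x + y)) - INR (prime_pi x)
    <= 2 * y / ln y + 11 * (y * ln (ln y) / (ln y) ^ 2).
Proof.
move=> hx hy; set L := ln y; set l := ln L => hL.
have l1 : 1 <= l.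
  by rewrite -[1](ln_exp 1); apply: ln_le; [apply: exp_pos | have := exp_le_3; lra].
have lL : l <= L / 4 by apply: ln_le_quarter.
set z := exp (L / 2 - l).
have eL : exp L = y by apply: exp_ln; lra.
have el : exp l = L by apply: exp_ln; lra.
have zz : z ^ 2 = y / L ^ 2.
  rewrite /= Rmult_1_r /z -exp_plus.
  have -> : L / 2 - l + (L / 2 - l) = L + - l + - l by field.
  by rewrite !exp_plus !exp_Ropp eL el; field; lra.
have z1 : 1 < z by have := exp_ineq1_le (L / 2 - l); rewrite -/z; lra.
have z_le_sqr : z <= z ^ 2 by simpl; nra.
have yL : L ^ 2 <= y.
  have : 1 <= y / L ^ 2 by rewrite -zz; lra.
  have -> : y = y / L ^ 2 * L ^ 2 by field; lra.
  have : 0 < L ^ 2 by nra.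
  nra.
have := prime_pi_diff_le_sieve_real (x := x) (y := y) ltac:(lra) ltac:(lra) z1.
rewrite /z ln_exp -/z.
have := @long_range_arith y L l l1 ltac:(lra) yL.
lra.
Qed.

Theorem mainTheorem9 :
  exists C : R,
    forall x y : R, 2 <= x -> 3 <= y ->
      INR (prime_pi (x + y)) - INR (prime_pi x)
        <= 2 * y / ln y + C * (y * ln (ln y) / (ln y) ^ 2).
Proof.
exists (short_range_constant + 11) => x y hx hy.
have lny_gt1 : 1 < ln y by apply: Rlt_le_trans ln3_gt1 _; apply: ln_le; lra.
have error_ge0 : 0 <= y * ln (ln y) / ln y ^ 2.
  apply: Rmult_le_pos; last by apply/Rlt_le/Rinv_0_lt_compat; nra.
  by apply: Rmult_le_pos; [lra | rewrite -ln_1; apply: ln_le; lra].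
have C_ge0 : 0 <= short_range_constant.
  apply: Rmult_le_pos; [simpl; lra | apply/Rlt_le/Rinv_0_lt_compat].
  by rewrite -ln_1; apply: ln_increasing; have := ln3_gt1; lra.
rewrite Rmult_plus_distr_r.
case: (Rlt_le_dec (ln y) 64) => hL.
  by have := prime_pi_diff_short hx hy hL; lra.
by have := prime_pi_diff_long hx hy hL; nra.
Qed.
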